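(* Let $\theta\in\mathbb{R}$ with $\omega_0=\cos\theta\neq0$, $\gamma=\sin\theta$, and let $c,\kappa\in\mathbb{R}$. Let $\mathcal H_1$ be the operator on $\mathcal F^2(\mathbb C^3)$ (defined on polynomials) given by $$\mathcal H_1=\omega_0^{-2}\Big(\sum_{i,j=1}^3B_{ij}\,\zeta_i\partial_{\zeta_j}+\sum_{i,j,k,l=1}^3V_{ijkl}\,\zeta_i\partial_{\zeta_j}\zeta_k\partial_{\zeta_l}\Big)+\kappa,$$ with coefficients as in the context, and let $\mathcal H_1^\star$ be its adjoint with respect to the Fock inner product. Then $\mathcal H_1$ is $\mathcal C_3$-self-adjoint: $\mathcal C_3\mathcal H_1^\star\mathcal C_3=\mathcal H_1$.
   Context: $\mathcal F^2(\mathbb C^3)$ is the Hilbert space of entire functions $\psi(\zeta_1,\zeta_2,\zeta_3)$ with inner product $\langle\psi,\phi\rangle=\int_{\mathbb C^3}\psi\,\overline{\phi}\,dW(\zeta_1)dW(\zeta_2)dW(\zeta_3)$, $dW(u)=\pi^{-1}e^{-|u|^2}\,d(\mathrm{Re}\,u)\,d(\mathrm{Im}\,u)$ finite. The adjoint is characterized by $\langle\mathcal H_1\psi,K\rangle=\langle\psi,\mathcal H_1^\star K\rangle$ for the reproducing kernels $K^{[m_1,m_2,m_3]}_{\zeta_1,\zeta_2,\zeta_3}(u)=\prod_{j=1}^3u_j^{m_j}e^{u_j\overline{\zeta_j}}$. $\mathcal C_3$ is the anti-linear conjugation $(\mathcal C_3\psi)(\zeta_1,\zeta_2,\zeta_3)=\overline{\psi(\overline{-\zeta_1},\overline{-\zeta_2},\overline{-\zeta_3})}$.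 Nonzero coefficients: $B_{11}=c\omega_0$, $B_{22}=-c\omega_0$, $B_{33}=-2\omega_0^2c$, $B_{12}=B_{21}=ic\gamma\omega_0$; $V_{1111}=V_{2222}=\tfrac14$, $V_{1122}=-\tfrac12$, $V_{1212}=V_{2121}=-\tfrac{\gamma^2}{4}$, $V_{1221}=-\tfrac{\gamma^2}{2}$, $V_{3333}=\omega_0^2$, $V_{1112}=V_{1121}=V_{1211}=V_{2111}=\tfrac{i\gamma}{4}$, $V_{2212}=V_{2221}=V_{1222}=V_{2122}=-\tfrac{i\gamma}{4}$, $V_{1133}=-\omega_0$, $V_{2233}=\omega_0$, $V_{1233}=V_{2133}=-i\gamma\omega_0$; all others zero. *)

From HB Require Import structures.
From Stdlib Require Import Reals.
From mathcomp Require Import all_boot all_order all_algebra.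
From mathcomp Require Import Rstruct.
From mathcomp Require Import complex.
From mathcomp Require Import mpoly.

Set Implicit Arguments.
Unset Strict Implicit.
Unset Printing Implicit Defensive.

Import GRing.Theory Num.Theory.
Local Open Scope ring_scope.
Local Open Scope complex_scope.

Definition Cx : Type := complex R.
Definition rC (x : R) : Cx := x%:C.

(* Polynomials in (zeta_1, zeta_2, zeta_3), i.e. the dense domain of
   holomorphic polynomials in F^2(C^3).  Variable zeta_{i+1} is 'X_i. *)
Definition poly3 := {mpoly Cx[3]}.

Definition mfact (m : 'X_{1..3}) : nat := (\prod_(i < 3) (m i)`!)%N.

(* Fock inner product <psi, phi> = \int psi conj(phi) dW dW dW on polynomials.
   Since <zeta^a, zeta^b> = a! delta_{ab} for the Gaussian measure dW, this is
   sum_a psi_a conj(phi_a) a!. *)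
Definition fock (p q : poly3) : Cx :=
  \sum_(m <- msupp p) p@_m * conjc (q@_m) * (mfact m)%:R.

(* Anti-linear conjugation (C_3 psi)(zeta) = conj(psi(conj(-zeta))):
   on coefficients, zeta^a with coefficient c becomes (-1)^|a| conj(c) zeta^a. *)
Definition C3 (p : poly3) : poly3 :=
  \sum_(m <- msupp p) (((-1) ^+ mdeg m) * conjc (p@_m)) *: 'X_[m].

(* Coefficients B_{ij}, indices 1..3 written 0..2. *)
Definition Bco (w g c : R) (i j : 'I_3) : Cx :=
  match nat_of_ord i, nat_of_ord j with
  | 0, 0 => rC (c * w)
  | 1, 1 => rC (- (c * w))
  | 2, 2 => rC (- (2 * w ^+ 2 * c))
  | 0, 1 | 1, 0 => 'i * rC (c * g * w)
  | _, _ => 0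
  end.

(* Coefficients V_{ijkl}, indices 1..3 written 0..2. *)
Definition Vco (w g : R) (i j k l : 'I_3) : Cx :=
  match nat_of_ord i, nat_of_ord j, nat_of_ord k, nat_of_ord l with
  | 0, 0, 0, 0 | 1, 1, 1, 1 => rC (4%:R^-1)
  | 0, 0, 1, 1 => rC (- (2%:R^-1))
  | 0, 1, 0, 1 | 1, 0, 1, 0 => rC (- (g ^+ 2 / 4%:R))
  | 0, 1, 1, 0 => rC (- (g ^+ 2 / 2%:R))
  | 2, 2, 2, 2 => rC (w ^+ 2)
  | 0, 0, 0, 1 | 0, 0, 1, 0 | 0, 1, 0, 0 | 1, 0, 0, 0 => 'i * rC (g / 4%:R)
  | 1, 1, 0, 1 | 1, 1, 1, 0 | 0, 1, 1, 1 | 1, 0, 1, 1 => - ('i * rC (g / 4%:R))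
  | 0, 0, 2, 2 => rC (- w)
  | 1, 1, 2, 2 => rC w
  | 0, 1, 2, 2 | 1, 0, 2, 2 => - ('i * rC (g * w))
  | _, _, _, _ => 0
  end.

Definition H1 (w g c kappa : R) (p : poly3) : poly3 :=
  rC (w ^- 2) *:
    ((\sum_(i < 3) \sum_(j < 3) Bco w g c i j *: ('X_i * p^`M(j)))
   + (\sum_(i < 3) \sum_(j < 3) \sum_(k < 3) \sum_(l < 3)
        Vco w g i j k l *: ('X_i * ('X_k * p^`M(l))^`M(j))))
  + rC kappa *: p.

Definition is_fock_adjoint (H Hs : poly3 -> poly3) : Prop :=
  forall p q : poly3, fock (H p) q = fock p (Hs q).

(* With respect to the bilinear Fischer pairing (p, q) = sum_a p_a q_a a!,
   multiplication by zeta_i is the transpose of d/dzeta_i, and the Fock product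
   is (p, conj q).  The operator H_1 is Fischer-symmetric: B is a symmetric
   matrix, and reversing (i, j, k, l) to (l, k, j, i) preserves V up to
   reordering commuting factors.  Hence the Fock adjoint of H_1 is
   q |-> conj (H_1 (conj q)).  Since C_3 is conjugation followed by
   p(zeta) |-> p(-zeta), and H_1 commutes with the latter (each zeta_i d_j is
   even), C_3 H_1^* C_3 = H_1. *)

From HB Require Import structures.
From Stdlib Require Import Reals.
From mathcomp Require Import all_boot all_order all_algebra.
From mathcomp Require Import Rstruct complex mpoly.
From mathcomp Require Import ring.

Set Implicit Arguments.
Unset Strict Implicit.
Unset Printing Implicit Defensive.
Import GRing.Theory Num.Theory.
Local Open Scope ring_scope.

Section Fischer.
Variables (n : nat) (R : comNzRingType).
Implicit Types (p q : {mpoly R[n]}) (m : 'X_{1..n}).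

Lemma mcoeff_sum_msupp (f : 'X_{1..n} -> R -> R) p m : f m 0 = 0 ->
  (\sum_(k <- msupp p) f k p@_k *: 'X_[k])@_m = f m p@_m.
Proof.
move=> f0; rewrite raddf_sum /=.
under eq_bigr do rewrite mcoeffZ mcoeffX.
have [pm | pNm] := boolP (m \in msupp p); last first.
  rewrite (memN_msupp_eq0 pNm) f0 big1_seq // => k /andP[_ pk].
  by case: eqP pk pNm => [-> ->|] //; rewrite mulr0.
rewrite (bigD1_seq m) ?msupp_uniq //= eqxx mulr1 big1 ?addr0 // => k.
by rewrite eq_sym => /negPf ->; rewrite mulr0.
Qed.

Definition mfactorial m : nat := (\prod_(i < n) (m i)`!)%N.

Lemma mfactorial_addU (a : 'I_n) m :
  mfactorial (U_(a) + m)%MM = ((m a).+1 * mfactorial m)%N.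
Proof.
rewrite /mfactorial (bigD1 a) // [in RHS](bigD1 a) //= mnmDE mnm1E eqxx add1n.
rewrite factS -mulnA; congr (_ * (_ * _))%N.
by apply: eq_bigr => i /negPf ia; rewrite mnmDE mnm1E eq_sym ia.
Qed.

Definition fischer p q : R :=
  \sum_(m <- msupp p) p@_m * q@_m * (mfactorial m)%:R.

Lemma fischer_supp (s : seq 'X_{1..n}) p q : uniq s -> {subset msupp p <= s} ->
  fischer p q = \sum_(m <- s) p@_m * q@_m * (mfactorial m)%:R.
Proof.
move=> us ps; rewrite (bigID (mem (msupp p))) /= [X in _ = _ + X]big1 ?addr0.
  rewrite -big_filter; apply: perm_big; apply: uniq_perm => [||m].
  - exact: msupp_uniq.
  - exact: filter_uniq.
  by rewrite mem_filter andb_idr //; apply: ps.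
by move=> m /memN_msupp_eq0 ->; rewrite !mul0r.
Qed.

Lemma fischerC p q : fischer p q = fischer q p.
Proof.
pose s := undup (msupp p ++ msupp q).
have sub_s r : {subset msupp r <= msupp p ++ msupp q} -> {subset msupp r <= s}.
  by move=> rs m /rs; rewrite mem_undup.
rewrite (@fischer_supp s p) ?(@fischer_supp s q) ?undup_uniq //.
- by apply: eq_bigr => m _; rewrite [p@_m * _]mulrC.
- by apply: sub_s => m mq; rewrite mem_cat mq orbT.
- by apply: sub_s => m mp; rewrite mem_cat mp.
Qed.

Lemma fischerDr p q1 q2 : fischer p (q1 + q2) = fischer p q1 + fischer p q2.
Proof.
rewrite /fischer -big_split; apply: eq_bigr => m _.
by rewrite mcoeffD mulrDr mulrDl.
Qed.

Lemma fischerZr a p q : fischer p (a *: q) = a * fischer p q.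
Proof.
by rewrite /fischer mulr_sumr; apply: eq_bigr => m _; rewrite mcoeffZ; ring.
Qed.

Lemma fischer_sumr I (r : seq I) (P : pred I) (F : I -> {mpoly R[n]}) p :
  fischer p (\sum_(i <- r | P i) F i) = \sum_(i <- r | P i) fischer p (F i).
Proof.
apply: (big_morph _ (fischerDr p)).
by rewrite /fischer big1 // => m _; rewrite mcoeff0; ring.
Qed.

Lemma fischerDl p1 p2 q : fischer (p1 + p2) q = fischer p1 q + fischer p2 q.
Proof. by rewrite fischerC fischerDr !(fischerC q). Qed.

Lemma fischerZl a p q : fischer (a *: p) q = a * fischer p q.
Proof. by rewrite fischerC fischerZr fischerC. Qed.

Lemma fischer_suml I (r : seq I) (P : pred I) (F : I -> {mpoly R[n]}) q :
  fischer (\sum_(i <- r | P i) F i) q = \sum_(i <- r | P i) fischer (F i) q.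
Proof.
by rewrite fischerC fischer_sumr; apply: eq_bigr => i _; rewrite fischerC.
Qed.

Lemma fischerXl m q : fischer 'X_[m] q = q@_m * (mfactorial m)%:R.
Proof. by rewrite /fischer msuppX big_seq1 mcoeffX eqxx mul1r. Qed.

Lemma fischer_mulX (a : 'I_n) p q : fischer ('X_a * p) q = fischer p q^`M(a).
Proof.
rewrite {1}(mpolyE p) mulr_sumr fischer_suml; apply: eq_bigr => m _.
rewrite -scalerAr -mpolyXD fischerZl fischerXl mfactorial_addU mcoeff_mderiv.
by rewrite addmC natrM -mulr_natl; ring.
Qed.

Lemma fischer_mderiv (a : 'I_n) p q : fischer p^`M(a) q = fischer p ('X_a * q).
Proof. by rewrite fischerC -fischer_mulX fischerC. Qed.

Definition xderiv (i j : 'I_n) p := 'X_i * p^`M(j).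

Lemma fischer_xderiv (i j : 'I_n) p q :
  fischer (xderiv i j p) q = fischer p (xderiv j i q).
Proof. by rewrite fischer_mulX fischer_mderiv. Qed.

Lemma xderivC (i j k l : 'I_n) p : j != k -> l != i ->
  xderiv i j (xderiv k l p) = xderiv k l (xderiv i j p).
Proof.
move=> jk li; rewrite /xderiv !mderivM !mderivX !mnm1E eq_sym (negPf jk).
by rewrite eq_sym (negPf li) !scale0r !mul0r !add0r mulrCA mderiv_comm.
Qed.

Definition fischer_symmetric (T : {mpoly R[n]} -> {mpoly R[n]}) :=
  forall p q, fischer (T p) q = fischer p (T q).

Lemma fischer_symmetricD (T T' : {mpoly R[n]} -> {mpoly R[n]}) :
  fischer_symmetric T -> fischer_symmetric T' ->
  fischer_symmetric (fun p => T p + T' p).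
Proof. by move=> sT sT' p q; rewrite fischerDl fischerDr sT sT'. Qed.

Lemma fischer_symmetricZ a (T : {mpoly R[n]} -> {mpoly R[n]}) :
  fischer_symmetric T -> fischer_symmetric (fun p => a *: T p).
Proof. by move=> sT p q; rewrite fischerZl fischerZr sT. Qed.

Definition xderiv_comb (B : 'I_n -> 'I_n -> R) p :=
  \sum_(i < n) \sum_(j < n) B i j *: xderiv i j p.

Definition xderiv2_comb (V : 'I_n -> 'I_n -> 'I_n -> 'I_n -> R) p :=
  \sum_(i < n) \sum_(j < n) \sum_(k < n) \sum_(l < n)
    V i j k l *: xderiv i j (xderiv k l p).

Lemma fischer_symmetric_xderiv_comb (B : 'I_n -> 'I_n -> R) :
  (forall i j, B i j = B j i) -> fischer_symmetric (xderiv_comb B).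
Proof.
move=> Bsym p q; rewrite /xderiv_comb fischer_sumr exchange_big fischer_suml.
apply: eq_bigr => i _; rewrite fischer_sumr fischer_suml; apply: eq_bigr => j _.
by rewrite fischerZl fischerZr fischer_xderiv Bsym.
Qed.

(* Coefficient form of
   [xderiv2_comb V = xderiv2_comb (fun i j k l => V l k j i)] modulo the
   commutations [xderivC]; the right-hand side is the Fischer transpose of
   [xderiv2_comb V]. *)
Definition reversal_invariant (V : 'I_n -> 'I_n -> 'I_n -> 'I_n -> R) :=
  forall f : 'I_n -> 'I_n -> 'I_n -> 'I_n -> R,
  (forall i j k l, j != k -> l != i -> f i j k l = f k l i j) ->
  \sum_(i < n) \sum_(j < n) \sum_(k < n) \sum_(l < n) V i j k l * f l k j i =
  \sum_(i < n) \sum_(j < n) \sum_(k < n) \sum_(l < n) V i j k l * f i j k l.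

Lemma fischer_symmetric_xderiv2_comb (V : 'I_n -> 'I_n -> 'I_n -> 'I_n -> R) :
  reversal_invariant V -> fischer_symmetric (xderiv2_comb V).
Proof.
move=> Vrev p q; rewrite /xderiv2_comb.
have -> : fischer (\sum_(i < n) \sum_(j < n) \sum_(k < n) \sum_(l < n)
      V i j k l *: xderiv i j (xderiv k l p)) q =
    \sum_(i < n) \sum_(j < n) \sum_(k < n) \sum_(l < n)
      V i j k l * fischer p (xderiv l k (xderiv j i q)).
  rewrite fischer_suml; apply: eq_bigr => i _; rewrite fischer_suml.
  apply: eq_bigr => j _; rewrite fischer_suml; apply: eq_bigr => k _.
  rewrite fischer_suml; apply: eq_bigr => l _.
  by rewrite fischerZl !fischer_xderiv.
pose f i j k l := fischer p (xderiv i j (xderiv k l q)).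
rewrite (Vrev f); last first.
  by move=> i j k l jk li; rewrite /f xderivC.
rewrite fischer_sumr; apply: eq_bigr => i _; rewrite fischer_sumr.
apply: eq_bigr => j _; rewrite fischer_sumr; apply: eq_bigr => k _.
rewrite fischer_sumr; apply: eq_bigr => l _.
by rewrite fischerZr.
Qed.

(* [mreflect p] is [p(-x)]. *)
Definition mreflect p : {mpoly R[n]} :=
  \sum_(m <- msupp p) ((-1) ^+ mdeg m * p@_m) *: 'X_[m].

Lemma mcoeff_mreflect p m : (mreflect p)@_m = (-1) ^+ mdeg m * p@_m.
Proof.
exact: (@mcoeff_sum_msupp (fun m c => (-1) ^+ mdeg m * c) p m (mulr0 _)).
Qed.

Lemma mreflectK : involutive mreflect.
Proof.
move=> p; apply/mpolyP => m.
by rewrite !mcoeff_mreflect mulrA -expr2 sqrr_sign mul1r.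
Qed.

Lemma mreflect_is_linear : linear mreflect.
Proof.
move=> a p q; apply/mpolyP => m.
by rewrite mcoeffD mcoeffZ !mcoeff_mreflect mcoeffD mcoeffZ; ring.
Qed.
HB.instance Definition _ :=
  GRing.isLinear.Build R {mpoly R[n]} {mpoly R[n]} _ mreflect
    mreflect_is_linear.

Lemma mreflectX m : mreflect 'X_[m] = (-1) ^+ mdeg m *: 'X_[m].
Proof.
apply/mpolyP => k; rewrite mcoeff_mreflect mcoeffZ !mcoeffX.
by case: eqP => [->|]; rewrite ?mulr0.
Qed.

Lemma mreflect_mulX (a : 'I_n) p : mreflect ('X_a * p) = - ('X_a * mreflect p).
Proof.
rewrite {1}(mpolyE p) mulr_sumr linear_sum [mreflect p]/mreflect mulr_sumr.
rewrite -sumrN; apply: eq_bigr => m _.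
rewrite -!scalerAr -!mpolyXD linearZ /= mreflectX mdegD mdeg1.
by rewrite scalerA exprS -scaleNr; congr (_ *: _); ring.
Qed.

Lemma mreflect_mderiv (a : 'I_n) p : mreflect p^`M(a) = - (mreflect p)^`M(a).
Proof.
apply/mpolyP => m.
rewrite mcoeffN mcoeff_mreflect !mcoeff_mderiv mcoeff_mreflect.
by rewrite mdegD mdeg1 addn1 exprS mulrnAr mulN1r mulNr mulNrn opprK.
Qed.

Lemma mreflect_xderiv (i j : 'I_n) p :
  mreflect (xderiv i j p) = xderiv i j (mreflect p).
Proof. by rewrite /xderiv mreflect_mulX mreflect_mderiv mulrN opprK. Qed.

Lemma mreflect_xderiv_comb (B : 'I_n -> 'I_n -> R) p :
  mreflect (xderiv_comb B (mreflect p)) = xderiv_comb B p.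
Proof.
rewrite /xderiv_comb linear_sum; apply: eq_bigr => i _; rewrite linear_sum.
by apply: eq_bigr => j _; rewrite linearZ /= mreflect_xderiv mreflectK.
Qed.

Lemma mreflect_xderiv2_comb (V : 'I_n -> 'I_n -> 'I_n -> 'I_n -> R) p :
  mreflect (xderiv2_comb V (mreflect p)) = xderiv2_comb V p.
Proof.
rewrite /xderiv2_comb linear_sum; apply: eq_bigr => i _; rewrite linear_sum.
apply: eq_bigr => j _; rewrite linear_sum; apply: eq_bigr => k _.
rewrite linear_sum; apply: eq_bigr => l _.
by rewrite linearZ /= !mreflect_xderiv mreflectK.
Qed.

End Fischer.

Local Open Scope complex_scope.

Definition mconj (p : poly3) : poly3 := map_mpoly conjc p.

Lemma mcoeff_mconj p m : (mconj p)@_m = conjc p@_m.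
Proof. exact: mcoeff_map_mpoly. Qed.

Lemma mconjK : involutive mconj.
Proof. by move=> p; apply/mpolyP => m; rewrite !mcoeff_mconj conjcK. Qed.

Lemma mconj_mreflect p : mconj (mreflect p) = mreflect (mconj p).
Proof.
apply/mpolyP => m; rewrite mcoeff_mconj !mcoeff_mreflect mcoeff_mconj.
by rewrite rmorphM rmorphXn rmorphN1.
Qed.

Lemma C3E p : C3 p = mreflect (mconj p).
Proof.
apply/mpolyP => m; rewrite mcoeff_mreflect mcoeff_mconj.
rewrite /C3 (@mcoeff_sum_msupp _ _ (fun m c => (-1) ^+ mdeg m * conjc c)) //.
by rewrite rmorph0 mulr0.
Qed.

Lemma fock_fischer p q : fock p q = fischer p (mconj q).
Proof. by apply: eq_bigr => m _; rewrite mcoeff_mconj. Qed.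

Lemma fock_nondegenerate q q' : (forall p, fock p q = fock p q') -> q = q'.
Proof.
move=> qq'; apply/mpolyP => m.
have mfact_neq0 : (mfact m)%:R != 0 :> Cx.
  by rewrite pnatr_eq0 -lt0n prodn_gt0 // => i; rewrite fact_gt0.
have := qq' 'X_[m]; rewrite /fock msuppX !big_seq1 mcoeffX eqxx !mul1r.
by move=> /(mulIf mfact_neq0) /(congr1 conjc); rewrite !conjcK.
Qed.

Lemma fock_adjoint_unique (T S S' : poly3 -> poly3) :
  is_fock_adjoint T S -> is_fock_adjoint T S' -> S =1 S'.
Proof. by move=> TS TS' q; apply: fock_nondegenerate => p; rewrite -TS TS'. Qed.

Lemma fock_adjoint_conj (T : poly3 -> poly3) :
  fischer_symmetric T -> is_fock_adjoint T (mconj \o T \o mconj).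
Proof. by move=> Tsym p q; rewrite !fock_fischer /= mconjK Tsym. Qed.

Lemma C3_fock_adjoint_even (T Ts : poly3 -> poly3) :
  fischer_symmetric T -> is_fock_adjoint T Ts ->
  (forall p, mreflect (T (mreflect p)) = T p) ->
  forall p, C3 (Ts (C3 p)) = T p.
Proof.
move=> Tsym TTs Teven p.
rewrite (fock_adjoint_unique TTs (fock_adjoint_conj Tsym)) /= !C3E.
by rewrite mconj_mreflect !mconjK Teven.
Qed.

Lemma H1E w g c kappa p : H1 w g c kappa p =
  rC (w ^- 2) *: (xderiv_comb (Bco w g c) p + xderiv2_comb (Vco w g) p)
  + rC kappa *: p.
Proof. by []. Qed.

Lemma Bco_sym w g c i j : Bco w g c i j = Bco w g c j i.
Proof. by case: i j => [[|[|[|?]]] ?] [[|[|[|?]]] ?]. Qed.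

Lemma Vco_reversal_invariant w g : reversal_invariant (Vco w g).
Proof.
(* [V l k j i] and [V i j k l] differ only at the entries V_1122, V_1133,
   V_2233, V_1233 and V_2133, whose two factors commute. *)
move=> f fC.
pose o0 : 'I_3 := @Ordinal 3 0 isT; pose o1 : 'I_3 := @Ordinal 3 1 isT.
pose o2 : 'I_3 := @Ordinal 3 2 isT.
have sum3 (F : 'I_3 -> Cx) : \sum_(i < 3) F i = F o0 + F o1 + F o2.
  rewrite !big_ord_recr big_ord0 /= add0r.
  by congr (F _ + F _ + F _); apply: val_inj.
rewrite !sum3 (fC o1 o1 o0 o0) // (fC o2 o2 o0 o0) // (fC o2 o2 o1 o1) //.
rewrite (fC o2 o2 o1 o0) // (fC o2 o2 o0 o1) //.
cbv beta iota delta [Vco nat_of_ord o0 o1 o2]; rewrite !mul0r !addr0 !add0r.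
ring.
Qed.

Lemma H1_fischer_symmetric w g c kappa : fischer_symmetric (H1 w g c kappa).
Proof.
have symB := fischer_symmetric_xderiv_comb (Bco_sym w g c).
have symV := fischer_symmetric_xderiv2_comb (Vco_reversal_invariant w g).
have symH := fischer_symmetricD
  (fischer_symmetricZ (rC (w ^- 2)) (fischer_symmetricD symB symV))
  (fischer_symmetricZ (rC kappa) (fun p q => erefl (fischer p q))).
move=> p q; rewrite !H1E; exact: symH.
Qed.

Lemma mreflect_H1 w g c kappa p :
  mreflect (H1 w g c kappa (mreflect p)) = H1 w g c kappa p.
Proof.
rewrite !H1E linearD !linearZ_LR linearD /= mreflect_xderiv_comb.
by rewrite mreflect_xderiv2_comb mreflectK.
Qed.

Unset Implicit Arguments.

Theorem proposition2 (theta c kappa : R) :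
  cos theta <> 0%R ->
  let w := cos theta in
  let g := sin theta in
  (exists Hs : poly3 -> poly3, is_fock_adjoint (H1 w g c kappa) Hs) /\
  (forall Hs : poly3 -> poly3, is_fock_adjoint (H1 w g c kappa) Hs ->
     forall p : poly3, C3 (Hs (C3 p)) = H1 w g c kappa p).
Proof.
(* The identity holds for every [w], including the junk value [0 ^- 2 = 0]. *)
move=> _ w g; have H1sym := H1_fischer_symmetric w g c kappa.
split; first by eexists; exact: fock_adjoint_conj H1sym.
move=> Hs H1Hs.
exact: C3_fock_adjoint_even H1sym H1Hs (mreflect_H1 w g c kappa).
Qed.
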